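(* Let $p\ge1$, $0<\mu<\ell$, and real numbers $q_0,\dots,q_{p-1},r_0,\dots,r_{p-1}$. For $\nu\in[\mu,\ell]$ let $C_j(\nu):=q_j+r_j\nu$ and let $\mathbf C(\nu)\in\mathbb R^{p\times p}$ be the companion matrix with ones on the superdiagonal, last row $(C_0(\nu),C_1(\nu),\dots,C_{p-1}(\nu))$, and zeros elsewhere. Suppose there is no $\nu\in[\mu,\ell]$ with $C_0(\nu)=\dots=C_{p-1}(\nu)=0$. Then $$\sup_{\nu\in[\mu,\ell]}\rho(\mathbf C(\nu))=\sup_{\nu\in[\mu,\ell]}\liminf_{t\to\infty}\|\mathbf C(\nu)^t\|_\sigma^{1/t}\ge\liminf_{t\to\infty}\sup_{\nu\in[\mu,\ell]}\|\mathbf C(\nu)^t\|_\sigma^{1/t}.$$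
   Context: $\rho(\mathbf C)$ denotes the spectral radius (maximum modulus of an eigenvalue) and $\|\cdot\|_\sigma$ the spectral norm. *)

From HB Require Import structures.
From mathcomp Require Import all_boot all_order all_algebra.
From mathcomp Require Import complex.
From mathcomp Require Import all_classical all_reals all_analysis.
Set Implicit Arguments. Unset Strict Implicit. Unset Printing Implicit Defensive.
Import Order.TTheory GRing.Theory Num.Theory.
Local Open Scope ring_scope.
Local Open Scope classical_set_scope.

Definition spectral_radius (R : realType) (n : nat) (A : 'M[R]_n) : R :=
  sup [set Normc.normc z | z in
        [set z : R[i] | eigenvalue (map_mx (fun x : R => (x%:C)%C) A) z]].

Definition euclid_norm (R : realType) (n : nat) (x : 'cV[R]_n) : R :=
  Num.sqrt (\sum_(i < n) x i 0 ^+ 2).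

(* Spectral norm = operator norm induced by the Euclidean norm
   (= largest singular value). *)
Definition spectral_norm (R : realType) (n : nat) (A : 'M[R]_n) : R :=
  sup [set euclid_norm (A *m x) | x in [set x : 'cV[R]_n | euclid_norm x = 1]].

Definition companion (R : realType) (p : nat) (q r : 'I_p -> R) (nu : R)
  : 'M[R]_p :=
  \matrix_(i, j) (if (i : nat).+1 == j then 1
                  else if (i : nat) == p.-1 then q j + r j * nu else 0).

(* If w is a complex eigenvector of the real matrix A for the eigenvalue lam,
   applying the real operator A^t to the real and imaginary parts of w gives
   |lam|^t |w| <= ||A^t|| |w|, hence rho(A) <= ||A^t||^(1/t) for all t >= 1.
   Conversely, factoring the characteristic polynomial and using
   Cayley-Hamilton, the entries of A^t are at most K (r + e)^t whenever
   rho(A) <= r, where K depends only on e, r, the size of A and a bound on its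
   entries.  On [mu, l] the entries of C(nu) are uniformly bounded, so
   ||C(nu)^t||^(1/t) <= sup rho + e for every nu once t is large, which gives
   both the equality and the inequality. *)

From HB Require Import structures.
From mathcomp Require Import all_boot all_order all_algebra.
From mathcomp Require Import complex.
From mathcomp Require Import all_classical all_reals all_analysis.
From mathcomp Require Import ring lra.
Import Order.TTheory GRing.Theory Num.Theory.
Local Open Scope ring_scope.
Local Open Scope classical_set_scope.

Section LiminfBounds.
Context {R : realType}.
Local Open Scope ereal_scope.

Lemma limn_einf_ge_eventually N (u : (\bar R)^nat) (b : \bar R) :
  (forall n, (N <= n)%N -> b <= u n) -> b <= limn_einf u.
Proof.
move=> ub; rewrite limn_einf_lim; have /cvg_lim -> := @cvg_einfs_sup _ u => //.
apply: (@le_trans _ _ (einfs u N)); last by apply: ereal_sup_ubound; exists N.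
by apply: le_ereal_inf_tmp => _ [k /= Nk <-]; apply: ub.
Qed.

Lemma limn_einf_le_eventually N (u : (\bar R)^nat) (b : \bar R) :
  (forall n, (N <= n)%N -> u n <= b) -> limn_einf u <= b.
Proof.
move=> ub; rewrite limn_einf_lim; have /cvg_lim -> := @cvg_einfs_sup _ u => //.
apply: ge_ereal_sup => _ [m _ <-].
apply: (@le_trans _ _ (u (maxn m N))); last by apply: ub; rewrite leq_maxr.
by apply: ereal_inf_lbound; exists (maxn m N) => //=; rewrite leq_maxl.
Qed.

End LiminfBounds.

Section SupBounds.
Context {R : realType}.
Implicit Types (E : set R) (x : R).

Lemma sup_ge0 E : has_ubound E -> (forall y, E y -> 0 <= y) -> 0 <= sup E.
Proof.
move=> ubE E_ge0; have [->|/set0P[y Ey]] := eqVneq E set0.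
  by rewrite sup0.
by rewrite (le_trans (E_ge0 _ Ey)) // ub_le_sup.
Qed.

Lemma ge0_ge_sup E x : 0 <= x -> ubound E x -> sup E <= x.
Proof.
move=> x_ge0 ubEx; have [->|E0] := eqVneq E set0; first by rewrite sup0.
by apply: ge_sup => //; apply/set0P.
Qed.

End SupBounds.

Section Roots.
Context {R : realType}.
Implicit Types (x y c d : R).

Lemma powR_exprnV x t : 0 <= x -> (0 < t)%N -> (x ^+ t) `^ (t%:R)^-1 = x.
Proof.
move=> x_ge0 t_gt0; rewrite -powR_mulrn // -powRrM mulfV ?powRr1 //.
by rewrite pnatr_eq0 -lt0n.
Qed.

Lemma le_powR2r c x y : 0 <= c -> 0 <= x -> x <= y -> x `^ c <= y `^ c.
Proof.
move=> c_ge0 x_ge0 le_xy; apply: ge0_ler_powR; rewrite ?nnegrE //.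
exact: le_trans le_xy.
Qed.

Lemma bernoulli_ineq d k : 0 <= d -> 1 + k%:R * d <= (1 + d) ^+ k.
Proof.
move=> d_ge0; elim: k => [|k IHk]; first by rewrite mul0r addr0 expr0.
have X_ge1 : 1 <= (1 + d) ^+ k by rewrite exprn_ege1 // lerDl.
have K_ge0 : 0 <= k%:R :> R by [].
rewrite exprS -natr1; move: IHk X_ge1 K_ge0.
set X := (1 + d) ^+ k; set K := k%:R; nra.
Qed.

Lemma root_le1D_eventually c d : 0 <= c -> 0 < d ->
  exists N, forall t, (N <= t)%N -> c `^ (t%:R)^-1 <= 1 + d.
Proof.
move=> c_ge0 d_gt0; exists (Num.truncn (c / d)).+1 => t le_Nt.
have t_gt0 : (0 < t)%N by apply: leq_trans le_Nt.
have c_le : c <= (1 + d) ^+ t.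
  have : c / d < t%:R.
    by rewrite (lt_le_trans (truncnS_gt _)) // ler_nat.
  rewrite ltr_pdivrMr // => c_lt.
  apply: le_trans _ (bernoulli_ineq d t (ltW d_gt0)).
  by rewrite ltW // ltr_wpDl.
have d1_ge0 : 0 <= 1 + d by rewrite addr_ge0 // ltW.
rewrite -[leRHS](@powR_exprnV (1 + d) t) //.
by apply: le_powR2r; rewrite ?invr_ge0.
Qed.

End Roots.

Section EuclidNorm.
Context {R : realType} {n : nat}.
Implicit Types (x : 'cV[R]_n) (A : 'M[R]_n).

Lemma euclid_norm_ge0 x : 0 <= euclid_norm x.
Proof. exact: sqrtr_ge0. Qed.

Lemma euclid_normE x : euclid_norm x ^+ 2 = \sum_i x i 0 ^+ 2.
Proof. by rewrite sqr_sqrtr // sumr_ge0 // => i _; rewrite sqr_ge0. Qed.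

Lemma euclid_normZ (c : R) x : euclid_norm (c *: x) = `|c| * euclid_norm x.
Proof.
rewrite /euclid_norm -sqrtr_sqr -sqrtrM ?sqr_ge0 // mulr_sumr.
by congr Num.sqrt; apply: eq_bigr => i _; rewrite mxE exprMn.
Qed.

Lemma abs_coord_le_euclid_norm x i : `|x i 0| <= euclid_norm x.
Proof.
rewrite /euclid_norm -sqrtr_sqr ler_wsqrtr // (bigD1 i) //= lerDl.
by rewrite sumr_ge0 // => j _; rewrite sqr_ge0.
Qed.

Lemma euclid_norm_eq0 x : (euclid_norm x == 0) = (x == 0).
Proof.
apply/eqP/eqP => [x0|->]; last first.
  by rewrite -(scale0r 0) euclid_normZ normr0 mul0r.
apply/matrixP => i j; rewrite ord1 mxE; apply/eqP; rewrite -normr_eq0.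
by rewrite eq_le normr_ge0 andbT -x0 abs_coord_le_euclid_norm.
Qed.

Lemma euclid_norm_le_l1 x : euclid_norm x <= \sum_i `|x i 0|.
Proof.
have [l1_ge0 sumsq_le] : 0 <= \sum_i `|x i 0| /\
    \sum_i x i 0 ^+ 2 <= (\sum_i `|x i 0|) ^+ 2.
  elim/big_rec2: _ => [|i a s _ [s_ge0 le_a_s]]; first by rewrite expr0n.
  rewrite -[x i 0 ^+ 2]real_normK ?num_real //.
  have := normr_ge0 (x i 0); set c := `|x i 0|; split; nra.
by rewrite /euclid_norm -(ger0_norm l1_ge0) -sqrtr_sqr ler_wsqrtr.
Qed.

Lemma euclid_norm_mulmx_unit_le A x :
  euclid_norm x = 1 -> euclid_norm (A *m x) <= \sum_i \sum_j `|A i j|.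
Proof.
move=> x1; apply: (le_trans (euclid_norm_le_l1 _)); apply: ler_sum => i _.
rewrite mxE; apply: (le_trans (ler_norm_sum _ _ _)); apply: ler_sum => j _.
by rewrite normrM -[leRHS]mulr1 ler_wpM2l // -x1 abs_coord_le_euclid_norm.
Qed.

Let unit_image A :=
  [set euclid_norm (A *m x) | x in [set x : 'cV[R]_n | euclid_norm x = 1]].

Lemma has_ubound_unit_image A : has_ubound (unit_image A).
Proof.
exists (\sum_i \sum_j `|A i j|) => _ [x x1 <-].
exact: euclid_norm_mulmx_unit_le.
Qed.

Lemma spectral_norm_ge0 A : 0 <= spectral_norm A.
Proof.
apply: sup_ge0 (has_ubound_unit_image A) _ => _ [x _ <-].
exact: euclid_norm_ge0.
Qed.

Lemma spectral_norm_le_sum_abs A : spectral_norm A <= \sum_i \sum_j `|A i j|.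
Proof.
apply: ge0_ge_sup; first by do 2!apply: sumr_ge0 => ? _.
by move=> _ [x x1 <-]; apply: euclid_norm_mulmx_unit_le.
Qed.

Lemma euclid_norm_mulmx_le A x :
  euclid_norm (A *m x) <= spectral_norm A * euclid_norm x.
Proof.
have [->|x_neq0] := eqVneq x 0.
  by rewrite mulmx0 -(scale0r 0) euclid_normZ normr0 !mul0r mulr0.
have x_gt0 : 0 < euclid_norm x.
  by rewrite lt_def euclid_norm_eq0 x_neq0 euclid_norm_ge0.
have xV_ge0 : 0 <= (euclid_norm x)^-1 by rewrite invr_ge0 ltW.
have y1 : euclid_norm ((euclid_norm x)^-1 *: x) = 1.
  by rewrite euclid_normZ ger0_norm // mulVf ?gt_eqF.
have := ub_le_sup (has_ubound_unit_image A) (ex_intro2 _ _ _ y1 erefl).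
by rewrite -scalemxAr euclid_normZ ger0_norm // mulrC ler_pdivrMr.
Qed.

End EuclidNorm.

Lemma char_poly_trmx (F : comNzRingType) n (A : 'M[F]_n) :
  char_poly A^T = char_poly A.
Proof.
rewrite /char_poly -det_tr /char_poly_mx linearB /=.
by rewrite tr_scalar_mx map_trmx trmxK.
Qed.

Lemma eigenvalue_cV (F : fieldType) n (A : 'M[F]_n) a :
  eigenvalue A a -> exists2 w : 'cV_n, w != 0 & A *m w = a *: w.
Proof.
rewrite eigenvalue_root_char -char_poly_trmx -eigenvalue_root_char.
case/eigenvalueP => v vA v_neq0; exists v^T; first by rewrite trmx_eq0.
by rewrite -[A]trmxK -trmx_mul vA linearZ.
Qed.

Lemma map_mxX {R S : pzSemiRingType} (f : {rmorphism R -> S}) n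
    (A : 'M[R]_n) t :
  map_mx f (A ^+ t) = map_mx f A ^+ t.
Proof.
elim: t => [|t IHt]; first by rewrite !expr0 map_mx1.
by rewrite !exprS -!mulmxE map_mxM IHt.
Qed.

Lemma normc_ge0 {R : rcfType} (z : R[i]) : 0 <= Normc.normc z.
Proof. by case: z => a b; apply: sqrtr_ge0. Qed.

Lemma normc_real {R : rcfType} (x : R) : Normc.normc (x%:C)%C = `|x|.
Proof. by rewrite /= expr0n /= addr0 sqrtr_sqr. Qed.

Lemma normcX {R : rcfType} (z : R[i]) k :
  Normc.normc (z ^+ k) = Normc.normc z ^+ k.
Proof.
by elim: k => [|k IHk]; rewrite ?expr0 ?Normc.normc1 // !exprS Normc.normcM IHk.
Qed.

Section ComplexifiedRealMatrix.
Context {R : realType} {n : nat}.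
Local Notation cx := (fun x : R => (x%:C)%C).
Local Notation Re := (@complex.Re R).
Local Notation Im := (@complex.Im R).
Local Notation nc := (@Normc.normc R).
Implicit Types (B : 'M[R]_n) (w : 'cV[R[i]]_n).

Lemma Re_mulmx_real B w : map_mx Re (map_mx cx B *m w) = B *m map_mx Re w.
Proof.
apply/matrixP => i j; rewrite !mxE raddf_sum; apply: eq_bigr => k _.
by rewrite !mxE; case: (w k j) => a b /=; rewrite mul0r subr0.
Qed.

Lemma Im_mulmx_real B w : map_mx Im (map_mx cx B *m w) = B *m map_mx Im w.
Proof.
apply/matrixP => i j; rewrite !mxE raddf_sum; apply: eq_bigr => k _.
by rewrite !mxE; case: (w k j) => a b /=; rewrite mul0r addr0.
Qed.

Lemma sumsq_normcE w : \sum_i nc (w i 0) ^+ 2 =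
  euclid_norm (map_mx Re w) ^+ 2 + euclid_norm (map_mx Im w) ^+ 2.
Proof.
rewrite !euclid_normE -big_split; apply: eq_bigr => i _; rewrite !mxE.
by case: (w i 0) => a b /=; rewrite sqr_sqrtr // addr_ge0 ?sqr_ge0.
Qed.

Lemma sumsq_normc_mulmx_real_le B w :
  \sum_i nc ((map_mx cx B *m w) i 0) ^+ 2
    <= spectral_norm B ^+ 2 * \sum_i nc (w i 0) ^+ 2.
Proof.
have le_sqr y :
    euclid_norm (B *m y) ^+ 2 <= spectral_norm B ^+ 2 * euclid_norm y ^+ 2.
  by rewrite -exprMn ler_sqr ?nnegrE ?euclid_norm_mulmx_le ?mulr_ge0
    ?euclid_norm_ge0 ?spectral_norm_ge0.
by rewrite !sumsq_normcE Re_mulmx_real Im_mulmx_real mulrDr lerD.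
Qed.

Lemma normc_eigenvalue_exp_le_spectral_norm (A : 'M[R]_n) lam t :
  eigenvalue (map_mx cx A) lam -> nc lam ^+ t <= spectral_norm (A ^+ t).
Proof.
case/eigenvalue_cV => w w_neq0 Aw.
have Atw : map_mx cx (A ^+ t) *m w = lam ^+ t *: w.
  rewrite map_mxX; elim: t => [|t IHt]; first by rewrite !expr0 mul1mx scale1r.
  by rewrite exprSr -mulmxE -mulmxA Aw -scalemxAr IHt scalerA -exprS.
have W_gt0 : 0 < \sum_i nc (w i 0) ^+ 2.
  rewrite lt_def sumr_ge0 ?andbT => [|i _]; last exact: sqr_ge0.
  apply: contra w_neq0 => /eqP /psumr_eq0P W0; apply/eqP/matrixP => i j.
  rewrite ord1 mxE; apply: Normc.eq0_normc; apply/eqP.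
  by rewrite -sqrf_eq0 W0 // => k _; rewrite sqr_ge0.
have := sumsq_normc_mulmx_real_le (A ^+ t) w.
under eq_bigr do rewrite Atw mxE Normc.normcM exprMn.
rewrite -mulr_sumr ler_pM2r // -normcX ler_sqr ?nnegrE ?spectral_norm_ge0 //.
exact: normc_ge0.
Qed.

End ComplexifiedRealMatrix.

Section SpectralRadius.
Context {R : realType} {n : nat}.
Local Notation cx := (fun x : R => (x%:C)%C).
Local Notation nc := (@Normc.normc R).
Implicit Types (A : 'M[R]_n).

Let eigen_moduli A :=
  [set nc z | z in [set z : R[i] | eigenvalue (map_mx cx A) z]].

Lemma has_ubound_eigen_moduli A : has_ubound (eigen_moduli A).
Proof.
exists (spectral_norm A) => _ [z Az <-].
by rewrite -[nc z]expr1 -[A]expr1 normc_eigenvalue_exp_le_spectral_norm.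
Qed.

Lemma normc_eigenvalue_le_spectral_radius A z :
  eigenvalue (map_mx cx A) z -> nc z <= spectral_radius A.
Proof.
by move=> Az; apply: (ub_le_sup (has_ubound_eigen_moduli A)); exists z.
Qed.

Lemma spectral_radius_ge0 A : 0 <= spectral_radius A.
Proof.
apply: sup_ge0 (has_ubound_eigen_moduli A) _ => _ [z _ <-]; exact: normc_ge0.
Qed.

Lemma spectral_radius_le_root_spectral_norm A t : (0 < t)%N ->
  spectral_radius A <= spectral_norm (A ^+ t) `^ (t%:R)^-1.
Proof.
move=> t_gt0; apply: ge0_ge_sup; first exact: powR_ge0.
move=> _ [z Az <-]; rewrite -(powR_exprnV _ _ (normc_ge0 z) t_gt0).
apply: le_powR2r; rewrite ?invr_ge0 ?exprn_ge0 ?normc_ge0 //.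
exact: normc_eigenvalue_exp_le_spectral_norm.
Qed.

End SpectralRadius.

Section ComplexPowerBound.
Context {R : realType}.
Local Notation nc := (@Normc.normc R).

Lemma normc_sum (I : Type) (s : seq I) (F : I -> R[i]) :
  nc (\sum_(i <- s) F i) <= \sum_(i <- s) nc (F i).
Proof.
elim/big_rec2: _ => [|i a b _ le_ab]; first by rewrite Normc.normc0.
by apply: le_trans (le_normcD _ _) _; rewrite lerD2l.
Qed.

Lemma normc_recurrence_le (x w : nat -> R[i]) (z : R[i]) (r e K : R) :
  0 <= r -> 0 < e -> nc z <= r ->
  (forall k, x k.+1 = z * x k + w k) ->
  (forall k, nc (w k) <= K * e * (r + e) ^+ k) ->
  nc (x 0%N) <= K ->
  forall k, nc (x k) <= K * (r + e) ^+ k.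
Proof.
move=> r_ge0 e_gt0 z_le x_rec w_le x0_le.
elim=> [|k IHk]; first by rewrite mulr1.
rewrite x_rec; apply: le_trans (le_normcD _ _) _; rewrite Normc.normcM.
have zx_le : nc z * nc (x k) <= r * (K * (r + e) ^+ k).
  by apply: ler_pM; rewrite ?normc_ge0.
move: (w_le k) zx_le; rewrite exprS.
by set S := (r + e) ^+ k; set X := _ * nc (x k); set W := nc (w k); nra.
Qed.

Context {n : nat}.
Variable A : 'M[R[i]]_n.+1.
Implicit Types (s : seq R[i]) (a r e : R).

Let horner_roots s := horner_mx A (\prod_(z <- s) ('X - z%:P)).
Let tail_power s k := A ^+ k *m horner_roots s.

Lemma tail_power_cons z s k :
  tail_power (z :: s) k = tail_power s k.+1 - z *: tail_power s k.
Proof.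
rewrite /tail_power /horner_roots big_cons rmorphM rmorphB /= horner_mx_X.
rewrite horner_mx_C mulrBl mulmxBr exprSr; congr (_ - _).
  by rewrite -!mulmxE mulmxA.
by rewrite -mulmxE mul_scalar_mx scalemxAr.
Qed.

Lemma horner_roots_entry_le s a r : 0 <= a -> 0 <= r ->
  (forall i j, nc (A i j) <= a) -> (forall z, z \in s -> nc z <= r) ->
  forall i j, nc (horner_roots s i j) <= (n.+1%:R * (a + r)) ^+ size s.
Proof.
move=> a_ge0 r_ge0 A_le; elim: s => [|z s IHs] s_le i j.
  rewrite /horner_roots big_nil rmorph1 expr0 mxE.
  by case: (i == j); rewrite ?Normc.normc1 ?Normc.normc0.
have s_le' y : y \in s -> nc y <= r.
  by move=> ys; rewrite s_le // in_cons ys orbT.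
have Az_le k : nc ((A - z%:M) i k) <= a + r.
  rewrite !mxE; apply: le_trans (le_normcD _ _) _; rewrite normcN lerD //.
  case: (i == k); first by rewrite mulr1n s_le ?mem_head.
  by rewrite mulr0n Normc.normc0.
rewrite /horner_roots big_cons rmorphM rmorphB /= horner_mx_X horner_mx_C.
rewrite -mulmxE mxE; apply: le_trans (normc_sum _ _ _) _.
apply: le_trans
  (_ : _ <= \sum_(k < n.+1) (a + r) * (n.+1%:R * (a + r)) ^+ size s) _.
  apply: ler_sum => k _; rewrite Normc.normcM.
  by apply: ler_pM; rewrite ?normc_ge0 ?Az_le ?IHs.
by rewrite sumr_const card_ord exprS -mulrnAl -mulr_natl.
Qed.

(* Dropping the roots of the characteristic polynomial one at a time:
   [tail_power (drop m rs)] vanishes for [m = 0] by Cayley-Hamilton, is [A ^+ k]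
   for [m = size rs], and each step is an instance of [normc_recurrence_le],
   at the cost of a factor [1 + e^-1]. *)
Lemma tail_power_entry_le rs r e B :
  0 <= r -> 0 < e -> 0 <= B -> (forall z, z \in rs -> nc z <= r) ->
  (forall m i j, nc (horner_roots (drop m rs) i j) <= B) ->
  (forall k, tail_power rs k = 0) ->
  forall m, (m <= size rs)%N -> forall k i j,
    nc (tail_power (drop m rs) k i j) <= B * (1 + e^-1) ^+ m * (r + e) ^+ k.
Proof.
move=> r_ge0 e_gt0 B_ge0 rs_le horner_le tail0; set u := 1 + e^-1.
have re_ge0 : 0 <= r + e by rewrite addr_ge0 // ltW.
have u_ge1 : 1 <= u by rewrite lerDl invr_ge0 ltW.
have u_ge0 : 0 <= u := le_trans ler01 u_ge1.
elim=> [_|m IHm lt_m] k i j.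
  by rewrite drop0 tail0 mxE Normc.normc0 expr0 mulr1 mulr_ge0 ?exprn_ge0.
have drop_m : drop m rs = nth 0 rs m :: drop m.+1 rs by rewrite (drop_nth 0).
apply: (@normc_recurrence_le (fun k => tail_power (drop m.+1 rs) k i j)
  (fun k => tail_power (drop m rs) k i j) (nth 0 rs m)) => //.
- by apply: rs_le; rewrite mem_nth.
- by move=> k'; rewrite drop_m tail_power_cons !mxE addrCA subrr addr0.
- move=> k'; apply: le_trans (IHm (ltnW lt_m) k' i j) _.
  have -> : B * u ^+ m.+1 * e = B * u ^+ m * (e + 1).
    by rewrite exprSr /u; field; rewrite gt_eqF.
  by rewrite ler_wpM2r ?exprn_ge0 // ler_peMr ?mulr_ge0 ?exprn_ge0 // lerDr ltW.
- rewrite /tail_power expr0 mul1mx; apply: le_trans (horner_le _ i j) _.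
  by rewrite ler_peMr // exprn_ege1.
Qed.

Lemma normc_exp_entry_le a r e : 1 <= a -> 0 <= r -> 0 < e ->
  (forall i j, nc (A i j) <= a) -> (forall z, eigenvalue A z -> nc z <= r) ->
  forall k i j, nc ((A ^+ k) i j) <=
    (n.+1%:R * (a + r)) ^+ n.+1 * (1 + e^-1) ^+ n.+1 * (r + e) ^+ k.
Proof.
move=> a_ge1 r_ge0 e_gt0 A_le eig_le.
have [rs char_rs] := closed_field_poly_normal (char_poly A).
rewrite (monicP (char_poly_monic A)) scale1r in char_rs.
have size_rs : size rs = n.+1.
  by have := size_char_poly A; rewrite char_rs size_prod_XsubC => -[].
have rs_le z : z \in rs -> nc z <= r.
  move=> z_rs; apply: eig_le.
  by rewrite eigenvalue_root_char char_rs root_prod_XsubC.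
have a_ge0 : 0 <= a := le_trans ler01 a_ge1.
have base_ge1 : 1 <= n.+1%:R * (a + r).
  by rewrite mulr_ege1 ?ler1n // (le_trans a_ge1) // lerDl.
set B := (n.+1%:R * (a + r)) ^+ n.+1.
have horner_le m i j : nc (horner_roots (drop m rs) i j) <= B.
  apply: le_trans
    (horner_roots_entry_le (drop m rs) a r a_ge0 r_ge0 A_le _ i j) _.
    by move=> z /mem_drop; apply: rs_le.
  by rewrite ler_weXn2l // size_drop -size_rs leq_subr.
have tail0 k : tail_power rs k = 0.
  by rewrite /tail_power /horner_roots -char_rs Cayley_Hamilton mulmx0.
have B_ge0 : 0 <= B := le_trans ler01 (exprn_ege1 _ base_ge1).
move=> k i j; have := tail_power_entry_le rs r e B r_ge0 e_gt0 B_ge0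
  rs_le horner_le tail0 _ (leqnn (size rs)) k i j.
by rewrite drop_size size_rs /tail_power /horner_roots big_nil rmorph1 mulmx1.
Qed.

End ComplexPowerBound.

Section UniformGelfandBound.
Context {R : realType} {n : nat}.
Local Notation cx := (fun x : R => (x%:C)%C).
Local Notation nc := (@Normc.normc R).
Implicit Types (A : 'M[R]_n.+1) (a r e : R).

Lemma spectral_norm_exp_le_uniform a r e : 1 <= a -> 0 <= r -> 0 < e ->
  exists2 c, 0 <= c & forall A t, (forall i j, `|A i j| <= a) ->
    spectral_radius A <= r -> spectral_norm (A ^+ t) <= c * (r + e) ^+ t.
Proof.
move=> a_ge1 r_ge0 e_gt0.
set K := (n.+1%:R * (a + r)) ^+ n.+1 * (1 + e^-1) ^+ n.+1.
have a_ge0 : 0 <= a := le_trans ler01 a_ge1.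
have K_ge0 : 0 <= K.
  by rewrite mulr_ge0 ?exprn_ge0 ?mulr_ge0 ?addr_ge0 ?invr_ge0 // ltW.
exists (K *+ n.+1 *+ n.+1); first by rewrite !mulrn_wge0.
move=> A t A_le rad_le.
have entry_le i j : `|(A ^+ t) i j| <= K * (r + e) ^+ t.
  have -> : `|(A ^+ t) i j| = nc ((map_mx cx A ^+ t) i j).
    by rewrite -map_mxX mxE normc_real.
  apply: normc_exp_entry_le => // [i' j'|z Az]; first by rewrite mxE normc_real.
  exact: le_trans (normc_eigenvalue_le_spectral_radius _ _ Az) rad_le.
apply: le_trans (spectral_norm_le_sum_abs _) _.
apply: le_trans (_ : _ <= \sum_(i < n.+1) \sum_(j < n.+1) K * (r + e) ^+ t) _.
  by do 2!apply: ler_sum => ? _.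
by rewrite !sumr_const card_ord !mulrnAl.
Qed.

Lemma root_spectral_norm_exp_le_eventually a r e : 1 <= a -> 0 <= r -> 0 < e ->
  exists N, forall t, (N <= t)%N -> forall A, (forall i j, `|A i j| <= a) ->
    spectral_radius A <= r -> spectral_norm (A ^+ t) `^ (t%:R)^-1 <= r + e.
Proof.
move=> a_ge1 r_ge0 e_gt0; set h := e / 2.
have h_gt0 : 0 < h by rewrite divr_gt0.
have rh_gt0 : 0 < r + h by rewrite ltr_wpDl.
have [c c_ge0 norm_le] := spectral_norm_exp_le_uniform a r h a_ge1 r_ge0 h_gt0.
have [N root_le] :=
  root_le1D_eventually c (h / (r + h)) c_ge0 (divr_gt0 h_gt0 rh_gt0).
exists N.+1 => t le_Nt A A_le rad_le.
have t_gt0 : (0 < t)%N := leq_trans (ltn0Sn N) le_Nt.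
have tV_ge0 : 0 <= (t%:R : R)^-1 by rewrite invr_ge0.
apply: le_trans
  (le_powR2r _ _ _ tV_ge0 (spectral_norm_ge0 _) (norm_le A t A_le rad_le)) _.
rewrite powRM ?exprn_ge0 ?(ltW rh_gt0) // powR_exprnV ?(ltW rh_gt0) //.
apply: le_trans (ler_wpM2r (ltW rh_gt0) (root_le t (ltnW le_Nt))) _.
by rewrite mulrDl mul1r divfK ?gt_eqF // -addrA -splitr.
Qed.

End UniformGelfandBound.

Section BoundedFamily.
Context {R : realType} {n : nat} {T : Type}.
Variables (S : set T) (A : T -> 'M[R]_n.+1) (a : R).
Hypotheses (S_neq0 : S !=set0) (a_ge1 : 1 <= a)
  (A_le : forall x, S x -> forall i j, `|A x i j| <= a).
Local Notation u x t := ((spectral_norm (A x ^+ t) `^ (t%:R)^-1)%:E).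
Local Open Scope ereal_scope.

Lemma spectral_radius_le_limn_einf x :
  (spectral_radius (A x))%:E <= limn_einf (fun t => u x t).
Proof.
apply: (limn_einf_ge_eventually 1) => t t_gt0.
by rewrite lee_fin spectral_radius_le_root_spectral_norm.
Qed.

Lemma root_spectral_norm_le_eventually (s e : R) : (0 < e)%R ->
  (forall x, S x -> spectral_radius (A x) <= s)%R ->
  exists N, forall t, (N <= t)%N -> forall x, S x -> u x t <= (s + e)%:E.
Proof.
move=> e_gt0 rad_le; have [x Sx] := S_neq0.
have s_ge0 : (0 <= s)%R := le_trans (spectral_radius_ge0 _) (rad_le x Sx).
have [N root_le] :=
  @root_spectral_norm_exp_le_eventually _ n a s e a_ge1 s_ge0 e_gt0.
exists N => t le_Nt y Sy.
by rewrite lee_fin root_le //; [exact: A_le | exact: rad_le].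
Qed.

Theorem sup_spectral_radius_eq_sup_limn_einf :
  ereal_sup [set (spectral_radius (A x))%:E | x in S]
  = ereal_sup [set limn_einf (fun t => u x t) | x in S]
  /\ limn_einf (fun t => ereal_sup [set u x t | x in S])
     <= ereal_sup [set limn_einf (fun t => u x t) | x in S].
Proof.
set F := [set _ | x in S]; set G := [set _ | x in S].
have FG : ereal_sup F <= ereal_sup G.
  apply: ge_ereal_sup => _ [x Sx <-].
  apply: le_trans (spectral_radius_le_limn_einf x) _.
  by apply: ereal_sup_ubound; exists x.
case E: (ereal_sup F) => [s| |].
- have rad_le x : S x -> (spectral_radius (A x) <= s)%R.
    by move=> Sx; rewrite -lee_fin -E; apply: ereal_sup_ubound; exists x.
  have Gs : ereal_sup G <= s%:E.
    apply: ge_ereal_sup => _ [x Sx <-]; apply/lee_addgt0Pr => e e_gt0.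
    have [N root_le] := root_spectral_norm_le_eventually _ _ e_gt0 rad_le.
    by apply: (limn_einf_le_eventually N) => t le_Nt; apply: root_le.
  have -> : ereal_sup G = s%:E by apply/le_anti; rewrite Gs -E FG.
  split=> //; apply/lee_addgt0Pr => e e_gt0.
  have [N root_le] := root_spectral_norm_le_eventually _ _ e_gt0 rad_le.
  apply: (limn_einf_le_eventually N) => t le_Nt.
  by apply: ge_ereal_sup => _ [x Sx <-]; apply: root_le.
- have -> : ereal_sup G = +oo by apply/eqP; rewrite -leye_eq -E FG.
  by rewrite leey.
- have [x Sx] := S_neq0.
  by have := ereal_sup_ubound (ex_intro2 _ _ x Sx erefl : F _); rewrite E.
Qed.

End BoundedFamily.

Lemma companion_entry_le {R : realType} p (q r : 'I_p -> R) (nu b : R) i j :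
  `|nu| <= b -> `|companion q r nu i j| <= 1 + \sum_k (`|q k| + `|r k| * b).
Proof.
move=> nu_le; have b_ge0 : 0 <= b := le_trans (normr_ge0 nu) nu_le.
have term_ge0 k : 0 <= `|q k| + `|r k| * b by rewrite addr_ge0 ?mulr_ge0.
have sum_ge0 : 0 <= \sum_k (`|q k| + `|r k| * b) by apply: sumr_ge0.
rewrite mxE; case: ifP => _; first by rewrite normr1 lerDl.
case: ifP => _; last by rewrite normr0 addr_ge0.
apply: le_trans (ler_normD _ _) _; rewrite normrM.
apply: le_trans (_ : _ <= `|q j| + `|r j| * b) _.
  by rewrite lerD2l ler_wpM2l.
apply: le_trans (_ : _ <= \sum_k (`|q k| + `|r k| * b)) _; last first.
  by rewrite lerDr.
by rewrite (bigD1 j) //= lerDl sumr_ge0.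
Qed.

Theorem lemma26 (R : realType) (p : nat) (mu l : R) (q r : 'I_p -> R) :
  (0 < p)%N -> 0 < mu -> mu < l ->
  ~ (exists2 nu, nu \in `[mu, l] & forall j : 'I_p, q j + r j * nu = 0) ->
  let C := companion q r in
  ereal_sup [set (spectral_radius (C nu))%:E | nu in `[mu, l]]
  = ereal_sup [set limn_einf (fun t : nat =>
        (spectral_norm (C nu ^+ t) `^ (t%:R)^-1)%:E) | nu in `[mu, l]]
  /\
  (limn_einf (fun t : nat =>
      ereal_sup [set (spectral_norm (C nu ^+ t) `^ (t%:R)^-1)%:E
                | nu in `[mu, l]])
   <= ereal_sup [set limn_einf (fun t : nat =>
        (spectral_norm (C nu ^+ t) `^ (t%:R)^-1)%:E) | nu in `[mu, l]])%E.
Proof.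
case: p q r => [//|p] q r _ mu_gt0 mu_lt_l _ C.
have l_ge0 : 0 <= l := ltW (lt_trans mu_gt0 mu_lt_l).
apply: (sup_spectral_radius_eq_sup_limn_einf _ _ (1 + \sum_k (`|q k| + `|r k| * l))).
- by exists mu; rewrite /= in_itv /= lexx ltW.
- by rewrite lerDl sumr_ge0 // => k _; rewrite addr_ge0 ?mulr_ge0.
- move=> nu; rewrite /= in_itv /= => /andP[mu_le nu_le] i j.
  by apply: companion_entry_le; rewrite ger0_norm // (le_trans (ltW mu_gt0)).
Qed.
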